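(* Let $f$ be a real function infinitely differentiable on a neighborhood of $0$, and write $c_i^f=f^{(i)}(0)$. Let $q$ be a positive integer and $w\in\mathbb{R}$. For $n\in\mathbb{N}_0$ put $u_n=\lfloor n/q\rfloor$ and $v_n=n \bmod q$, and define \[ a_n=\sum_{i=0}^{n}m_{n,i}\,c_i^f,\qquad m_{n,i}=\delta_{v_{n-i},0}\,\frac{(-1)^{u_{n-i}}\,w^{\llbracket u_{n-i}\rrbracket}}{(v_n+q\,u_i)!\;u_{n-i}!}. \] Then the function $\mathcal{A}^{f,D_1}(x)=\exp(wx^q)\sum_{n=0}^{\infty}a_nx^n$ matches all derivatives of $f$ at $0$; precisely, for every $N\in\mathbb{N}_0$, the function $x\mapsto\exp(wx^q)\sum_{n=0}^{N}a_nx^n$ satisfies \[ \frac{d^m}{dx^m}\Big[\exp(wx^q)\sum_{n=0}^{N}a_nx^n\Big]_{x=0}=f^{(m)}(0)\qquad\text{for all }0\le m\le N . \]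
   Context: $\delta_{j,0}$ is the Kronecker delta, $\lfloor\cdot\rfloor$ the floor function, and $n\bmod q$ the remainder of $n$ upon division by $q$. The generalized exponentiation is defined by $x^{\llbracket y\rrbracket}=1$ if $x=y=0$, and $x^{\llbracket y\rrbracket}=x^y$ otherwise (so in particular $0^{\llbracket 0\rrbracket}=1$, allowing $w=0$). *)

From Stdlib Require Import Reals Arith.
From Coquelicot Require Import Coquelicot.
Open Scope R_scope.

Definition gpow (x : R) (y : nat) : R :=
  if Req_EM_T x 0 then (if Nat.eqb y 0 then 1 else x ^ y) else x ^ y.

Definition kdelta0 (j : nat) : R := if Nat.eqb j 0 then 1 else 0.

Definition uq (q n : nat) : nat := Nat.div n q.
Definition vq (q n : nat) : nat := Nat.modulo n q.

Definition cf (f : R -> R) (i : nat) : R := Derive_n f i 0.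

Definition mcoef (q : nat) (w : R) (n i : nat) : R :=
  kdelta0 (vq q (n - i)) *
  ((-1) ^ (uq q (n - i)) * gpow w (uq q (n - i)) /
   (INR (fact (vq q n + q * uq q i)) * INR (fact (uq q (n - i))))).

Definition acoef (f : R -> R) (q : nat) (w : R) (n : nat) : R :=
  sum_f_R0 (fun i => mcoef q w n i * cf f i) n.

Definition approxA (f : R -> R) (q : nat) (w : R) (N : nat) (x : R) : R :=
  exp (w * x ^ q) * sum_f_R0 (fun n => acoef f q w n * x ^ n) N.

(* Let B_w be the coefficients of exp(w x^q) = sum_j w^j x^(qj) / j! and t_i = c_i / i!.
   Then a_n is the n-th coefficient of the Cauchy product t * B_(-w), and only t_0..t_n
   enter it, so up to degree N the coefficients of exp(w x^q) sum_(n<=N) a_n x^n are those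
   of B_w * (t' * B_(-w)), where t' is t truncated after degree N.  Since
   exp(w x^q) exp(-w x^q) = 1 and all these series are entire, B_w * (t' * B_(-w)) = t',
   and the m-th derivative at 0 is m! t_m = c_m.  Only the numbers c_i enter. *)

From Stdlib Require Import Reals Arith Lia Lra.
From Coquelicot Require Import Coquelicot.
Open Scope R_scope.

Definition PS_entire (a : nat -> R) : Prop := forall r, CV_disk a r.

Lemma PS_entire_CV_radius (a : nat -> R) :
  PS_entire a -> forall x, Rbar_lt (Rabs x) (CV_radius a).
Proof.
  intros Ha x. apply Rbar_lt_le_trans with (Finite (Rabs x + 1)).
  - simpl; lra.
  - (* [CV_radius a] is defined as [Lub_Rbar (CV_disk a)]. *)
    destruct (Lub_Rbar_correct (CV_disk a)) as [Hub _]. apply Hub, Ha.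
Qed.

Lemma PS_entire_CV_radius_pos (a : nat -> R) : PS_entire a -> Rbar_lt 0 (CV_radius a).
Proof. intros Ha. rewrite <- Rabs_R0. apply PS_entire_CV_radius, Ha. Qed.

Lemma CV_disk_abs (a : nat -> R) (r : R) :
  CV_disk a r -> CV_disk (fun n => Rabs (a n)) r.
Proof.
  apply ex_series_ext. intro n. rewrite !Rabs_mult, Rabs_Rabsolu. reflexivity.
Qed.

Lemma PS_entire_mult (a b : nat -> R) :
  PS_entire a -> PS_entire b -> PS_entire (PS_mult a b).
Proof.
  intros Ha Hb r. unfold CV_disk.
  apply (@ex_series_le R_AbsRing R_CompleteNormedModule) with
    (b := fun n => PS_mult (fun n => Rabs (a n)) (fun n => Rabs (b n)) n * Rabs r ^ n).
  - intro n. change norm with Rabs. rewrite Rabs_Rabsolu, Rabs_mult, <- RPow_abs.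
    apply Rmult_le_compat_r; [apply pow_le, Rabs_pos |].
    eapply Rle_trans; [apply Rsum_abs |].
    right. apply sum_eq. intros; apply Rabs_mult.
  - apply ex_pseries_R, ex_pseries_mult;
      apply PS_entire_CV_radius; intro; apply CV_disk_abs; auto.
Qed.

Lemma PS_mult_ext_le (a a' b b' : nat -> R) (n : nat) :
  (forall k, (k <= n)%nat -> a k = a' k) ->
  (forall k, (k <= n)%nat -> b k = b' k) ->
  PS_mult a b n = PS_mult a' b' n.
Proof.
  intros Ha Hb. apply sum_eq. intros k Hk. rewrite Ha, Hb by lia. reflexivity.
Qed.

Lemma is_series_finite_support (s : nat -> R) (N : nat) :
  (forall n, (N < n)%nat -> s n = 0) -> is_series s (sum_f_R0 s N).
Proof.
  intros Hs. apply is_series_Reals. intros eps Heps. exists N. intros n Hn.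
  assert (Hsum : sum_f_R0 s n = sum_f_R0 s N).
  { induction Hn as [| n Hn IH]; [reflexivity |].
    simpl. rewrite IH, Hs by lia. ring. }
  unfold R_dist. rewrite Hsum, Rminus_diag, Rabs_R0. exact Heps.
Qed.

Definition PS_trunc (N : nat) (a : nat -> R) (n : nat) : R :=
  if Nat.leb n N then a n else 0.

Lemma PS_trunc_le (N : nat) (a : nat -> R) (n : nat) :
  (n <= N)%nat -> PS_trunc N a n = a n.
Proof. intros Hn. unfold PS_trunc. destruct (Nat.leb_spec n N); [reflexivity | lia]. Qed.

Lemma PS_trunc_gt (N : nat) (a : nat -> R) (n : nat) :
  (N < n)%nat -> PS_trunc N a n = 0.
Proof. intros Hn. unfold PS_trunc. destruct (Nat.leb_spec n N); [lia | reflexivity]. Qed.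

Lemma is_pseries_PS_trunc (N : nat) (a : nat -> R) (x : R) :
  is_pseries (PS_trunc N a) x (sum_f_R0 (fun n => a n * x ^ n) N).
Proof.
  apply is_pseries_R.
  replace (sum_f_R0 (fun n => a n * x ^ n) N)
    with (sum_f_R0 (fun n => PS_trunc N a n * x ^ n) N).
  - apply is_series_finite_support. intros n Hn. rewrite PS_trunc_gt by exact Hn. ring.
  - apply sum_eq. intros n Hn. rewrite PS_trunc_le by exact Hn. reflexivity.
Qed.

Lemma PS_entire_trunc (N : nat) (a : nat -> R) : PS_entire (PS_trunc N a).
Proof.
  intro r. eexists. apply is_series_finite_support with (N := N).
  intros n Hn. rewrite PS_trunc_gt by exact Hn. rewrite Rmult_0_l. apply Rabs_R0.
Qed.

Definition exp_pow_coef (q : nat) (w : R) (n : nat) : R :=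
  if Nat.eqb (n mod q) 0 then w ^ (n / q) / INR (fact (n / q)) else 0.

Lemma exp_pow_coef_partial_sum (q : nat) (w x : R) (n : nat) : (0 < q)%nat ->
  sum_f_R0 (fun k => exp_pow_coef q w k * x ^ k) n =
  sum_f_R0 (fun j => / INR (fact j) * (w * x ^ q) ^ j) (n / q).
Proof.
  intros Hq. induction n as [| n IH].
  - rewrite Nat.Div0.div_0_l. unfold exp_pow_coef. simpl.
    rewrite Nat.Div0.mod_0_l, Nat.Div0.div_0_l. simpl. field.
  - assert (Hdiv := Nat.div_mod n q ltac:(lia)).
    assert (Hmod := Nat.mod_bound_pos n q ltac:(lia) Hq).
    set (a := (n / q)%nat) in *. set (r := (n mod q)%nat) in *.
    simpl sum_f_R0 at 1. rewrite IH.
    destruct (Nat.eq_dec (S r) q) as [Er | Er].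
    + assert (Emod : 0%nat = S n mod q) by (apply Nat.mod_unique with (S a); lia).
      assert (Ediv : S a = (S n / q)%nat) by (apply Nat.div_unique with 0%nat; lia).
      rewrite <- Ediv, tech5. unfold exp_pow_coef. rewrite <- Emod, <- Ediv. simpl Nat.eqb; cbv iota.
      replace (x * x ^ n) with ((x ^ q) ^ S a).
      * rewrite Rpow_mult_distr. field. apply INR_fact_neq_0.
      * rewrite <- pow_mult. replace (q * S a)%nat with (S n) by lia. reflexivity.
    + assert (Emod : S r = S n mod q) by (apply Nat.mod_unique with a; lia).
      assert (Ediv : a = (S n / q)%nat) by (apply Nat.div_unique with (S r); lia).
      rewrite <- Ediv. unfold exp_pow_coef. rewrite <- Emod. simpl Nat.eqb; cbv iota. ring.
Qed.

Lemma is_pseries_exp_pow (q : nat) (w x : R) : (0 < q)%nat ->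
  is_pseries (exp_pow_coef q w) x (exp (w * x ^ q)).
Proof.
  intros Hq. apply is_pseries_R, is_series_Reals.
  assert (Hexp := is_exp_Reals (w * x ^ q)).
  apply is_pseries_R, is_series_Reals in Hexp.
  intros eps Heps. destruct (Hexp eps Heps) as [N0 HN0]. exists (N0 * q)%nat.
  intros n Hn. rewrite exp_pow_coef_partial_sum by exact Hq.
  apply HN0, Nat.div_le_lower_bound; lia.
Qed.

Lemma PS_entire_exp_pow (q : nat) (w : R) : (0 < q)%nat -> PS_entire (exp_pow_coef q w).
Proof.
  intros Hq r. exists (exp (Rabs w * Rabs r ^ q)).
  apply (is_series_ext (fun n => exp_pow_coef q (Rabs w) n * Rabs r ^ n)).
  - intro n. unfold exp_pow_coef. destruct (Nat.eqb _ 0).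
    + rewrite Rabs_mult, Rabs_div, <- !RPow_abs, (Rabs_right (INR _)).
      * reflexivity.
      * apply Rle_ge, pos_INR.
      * apply INR_fact_neq_0.
    + rewrite !Rmult_0_l, Rabs_R0. reflexivity.
  - apply is_pseries_R, is_pseries_exp_pow, Hq.
Qed.

Lemma PS_mult_exp_pow_cancel (q : nat) (w : R) (a : nat -> R) (n : nat) :
  (0 < q)%nat -> PS_entire a ->
  PS_mult (exp_pow_coef q w) (PS_mult a (exp_pow_coef q (- w))) n = a n.
Proof.
  intros Hq Ha.
  assert (HB : PS_entire (exp_pow_coef q w)) by (apply PS_entire_exp_pow, Hq).
  assert (HB' : PS_entire (exp_pow_coef q (- w))) by (apply PS_entire_exp_pow, Hq).
  assert (HaB' : PS_entire (PS_mult a (exp_pow_coef q (- w))))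
    by (apply PS_entire_mult; assumption).
  apply PSeries_ext_recip.
  - apply PS_entire_CV_radius_pos, PS_entire_mult; assumption.
  - apply PS_entire_CV_radius_pos, Ha.
  - apply filter_forall. intro x.
    rewrite !PSeries_mult by (apply PS_entire_CV_radius; assumption).
    rewrite (is_pseries_unique _ _ _ (is_pseries_exp_pow q w x Hq)).
    rewrite (is_pseries_unique _ _ _ (is_pseries_exp_pow q (- w) x Hq)).
    rewrite Rmult_comm, Rmult_assoc, <- exp_plus.
    replace (- w * x ^ q + w * x ^ q) with 0 by ring. rewrite exp_0. ring.
Qed.

Lemma gpow_pow (x : R) (n : nat) : gpow x n = x ^ n.
Proof.
  unfold gpow. destruct (Req_EM_T x 0); [| reflexivity].
  destruct (Nat.eqb_spec n 0) as [-> |]; reflexivity.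
Qed.

Definition taylor_coef (f : R -> R) (i : nat) : R := cf f i / INR (fact i).

Lemma mcoef_cf (f : R -> R) (q : nat) (w : R) (n i : nat) :
  (0 < q)%nat -> (i <= n)%nat ->
  mcoef q w n i * cf f i = taylor_coef f i * exp_pow_coef q (- w) (n - i).
Proof.
  intros Hq Hi. unfold mcoef, taylor_coef, exp_pow_coef, kdelta0, uq, vq.
  rewrite gpow_pow.
  destruct (Nat.eqb_spec ((n - i) mod q) 0) as [Hdvd | _]; [| ring].
  assert (Hmod_i : (n mod q + q * (i / q))%nat = i).
  { assert (Hdiv := Nat.div_mod (n - i) q ltac:(lia)).
    assert (Hdiv_i := Nat.div_mod i q ltac:(lia)).
    assert (Hbound := Nat.mod_bound_pos i q ltac:(lia) Hq).
    assert (Emod : (i mod q)%nat = (n mod q)%nat)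
      by (apply Nat.mod_unique with ((n - i) / q + i / q)%nat; lia).
    lia. }
  rewrite Hmod_i. replace (- w) with (-1 * w) by ring. rewrite Rpow_mult_distr.
  field. split; apply INR_fact_neq_0.
Qed.

Lemma acoef_PS_mult (f : R -> R) (q : nat) (w : R) (n : nat) : (0 < q)%nat ->
  acoef f q w n = PS_mult (taylor_coef f) (exp_pow_coef q (- w)) n.
Proof.
  intros Hq. apply sum_eq. intros i Hi. apply mcoef_cf; assumption.
Qed.

Lemma approxA_PSeries (f : R -> R) (q : nat) (w : R) (N : nat) (x : R) : (0 < q)%nat ->
  approxA f q w N x = PSeries (PS_mult (exp_pow_coef q w) (PS_trunc N (acoef f q w))) x.
Proof.
  intros Hq. symmetry. apply is_pseries_unique, is_pseries_mult.
  - apply is_pseries_exp_pow, Hq.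
  - apply is_pseries_PS_trunc.
  - apply PS_entire_CV_radius, PS_entire_exp_pow, Hq.
  - apply PS_entire_CV_radius, PS_entire_trunc.
Qed.

Theorem proposition3 :
  forall (f : R -> R),
    (exists eps : R, 0 < eps /\
       forall (k : nat) (x : R), Rabs x < eps -> ex_derive_n f k x) ->
  forall (q : nat), (0 < q)%nat ->
  forall (w : R) (N m : nat), (m <= N)%nat ->
    Derive_n (approxA f q w N) m 0 = Derive_n f m 0.
Proof.
  intros f _ q Hq w N m HmN.
  set (t' := PS_trunc N (taylor_coef f)).
  assert (Hcoef : forall n, (n <= N)%nat ->
    PS_trunc N (acoef f q w) n = PS_mult t' (exp_pow_coef q (- w)) n).
  { intros n Hn. rewrite PS_trunc_le, acoef_PS_mult by assumption.
    apply PS_mult_ext_le; intros k Hk; [| reflexivity].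
    symmetry. apply PS_trunc_le. lia. }
  rewrite (Derive_n_ext _ _ m 0 (fun x => approxA_PSeries f q w N x Hq)).
  rewrite Derive_n_coef by (apply PS_entire_CV_radius_pos, PS_entire_mult;
    [apply PS_entire_exp_pow, Hq | apply PS_entire_trunc]).
  rewrite (PS_mult_ext_le _ _ _ (PS_mult t' (exp_pow_coef q (- w))))
    by (intros k Hk; try reflexivity; apply Hcoef; lia).
  rewrite PS_mult_exp_pow_cancel by (exact Hq || apply PS_entire_trunc).
  unfold t'. rewrite PS_trunc_le by exact HmN.
  unfold taylor_coef, cf. field. apply INR_fact_neq_0.
Qed.
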